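(* There is a constant $c>0$ such that for all $n$: if $R_1,\dots,R_\ell$ are ordered balanced set rectangles (each with respect to its own ordered balanced partition of $Z$), pairwise disjoint, with $\bigcup_{i\in[\ell]}R_i=\mathcal{L}_n$, then $\ell\ge 2^{cn}$.
   Context: $X=\{x_1,\dots,x_n\}$, $Y=\{y_1,\dots,y_n\}$, $Z=X\cup Y$, $z_i=x_i$ for $i\in[n]$, $z_i=y_{i-n}$ for $i\in[n+1,2n]$, $Z[i,j]=\{z_\ell: i\le\ell\le j\}$. $\mathcal{L}_n=\{U\subseteq Z : \exists i\in[n],\ x_i\in U \text{ and } y_i\in U\}$ (the set version of the language of words of length $2n$ over $\{a,b\}$ with two $a$'s at distance $n$). A partition $(\Pi_0,\Pi_1)$ of $Z$ is ordered (induced by $[i,j]$) if $\Pi_\ell=Z[i,j]$ for some $\ell\in\{0,1\}$; it is balanced if $2n/3\le|\Pi_0|,|\Pi_1|\le 4n/3$. A $(\Pi_0,\Pi_1)$-rectangle is a family $S\times T=\{U\cup V: U\in S,V\in T\}$ with $S\subseteq\mathcal{P}(\Pi_0)$, $T\subseteq\mathcal{P}(\Pi_1)$; it is ordered balanced if $(\Pi_0,\Pi_1)$ is ordered and balanced. *)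

From Stdlib Require Import Reals.
From mathcomp Require Import all_boot.
Set Implicit Arguments. Unset Strict Implicit. Unset Printing Implicit Defensive.

(* Z = {z_1,...,z_2n} is encoded as 'I_(2*n): the ordinal k stands for z_(k+1).
   Hence x_i (i in [n]) is the ordinal i-1 and y_i is the ordinal n+i-1. *)

Definition Lang (n : nat) : {set {set 'I_(2*n)}} :=
  [set U : {set 'I_(2*n)} |
     [exists x in U, exists y in U, (val x < n) && (val y == val x + n)]].

(* Z[i,j] = {z_l : i <= l <= j}  (1-based indices as in the paper) *)
Definition Zint (n i j : nat) : {set 'I_(2*n)} :=
  [set k : 'I_(2*n) | (i <= (val k).+1) && ((val k).+1 <= j)].

Definition ordered_part (n : nat) (P0 : {set 'I_(2*n)}) : Prop :=
  exists i j : nat, P0 = Zint n i j \/ ~: P0 = Zint n i j.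

Definition balanced_part (n : nat) (P0 : {set 'I_(2*n)}) : Prop :=
  [/\ 2 * n <= 3 * #|P0|, 3 * #|P0| <= 4 * n,
      2 * n <= 3 * #|~: P0| & 3 * #|~: P0| <= 4 * n].

Definition is_rectangle (n : nat) (P0 : {set 'I_(2*n)})
    (R : {set {set 'I_(2*n)}}) : Prop :=
  exists (S T : {set {set 'I_(2*n)}}),
    [/\ S \subset powerset P0, T \subset powerset (~: P0) &
        R = [set U :|: V | U in S, V in T]].

Definition ob_rectangle (n : nat) (R : {set {set 'I_(2*n)}}) : Prop :=
  exists P0 : {set 'I_(2*n)},
    [/\ ordered_part P0, balanced_part P0 & is_rectangle P0 R].

From Stdlib Require Import Reals ZArith.
From mathcomp Require Import all_boot all_order all_algebra.
From mathcomp Require Import ring lra zify.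
Set Implicit Arguments. Unset Strict Implicit. Unset Printing Implicit Defensive.
Import Order.TTheory GRing.Theory Num.Theory.

(* Weigh a set U of Z by w(U) = prod_t q(x_t in U, y_t in U), where q(0,0) = 1,
   q(1,0) = q(0,1) = 2 and q(1,1) = -1.  Summing the factorised weight gives
   w(L_n) = 4^n - 5^n, so one of the l rectangles of a disjoint cover of L_n has
   |w(R)| >= (5^n - 4^n) / l.

   On the other side, every pair {x_t, y_t} meets an interval of Z, or every pair
   meets its complement; so for an ordered partition we may assume that every pair
   meets Pi_0, s pairs being cut by the partition and u lying inside Pi_0.  Then
   w(A u B) = w_in(A) w_cut(A u B) for A in Pi_0 and B in Pi_1, and Cauchy-Schwarz
   with respect to |w_in| over the subsets of Pi_0, together with the orthogonality
   of the functions A |-> w_cut(A u B) for distinct B, gives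
   w(S x T)^2 <= (2^s 6^u) (5^s 6^u |T|) <= 36^u 20^s.  Balance means 3u <= n, so
   |w(R)|^6 <= 36^n 400^n = 14400^n, and comparing with (5^n - 4^n)^6 ~ 15625^n
   yields l^108 >= 2^n. *)

Section BigSums.
Local Open Scope ring_scope.

Definition ind (b : bool) : int := if b then 1 else 0.

Lemma prod_ind (I : finType) (P : pred I) : \prod_(i : I) ind (P i) = ind [forall i, P i].
Proof.
case: (boolP [forall i, P i]) => [/forallP P_all | /forallPn [i Pi_false]].
  by rewrite big1 // => i _; rewrite /ind P_all.
by rewrite (bigD1 i) //= /ind (negbTE Pi_false) mul0r.
Qed.

Lemma sum_pair_bool (V : nmodType) (F : bool -> bool -> V) :
  \sum_(p : bool * bool) F p.1 p.2 =
  F true true + F true false + F false true + F false false.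
Proof. by rewrite -(pair_big xpredT xpredT F) /= !big_bool /= !addrA. Qed.

Lemma ler_sum_subset (R : numDomainType) (I : finType) (A B : {set I}) (F : I -> R) :
  A \subset B -> (forall i, 0 <= F i) -> \sum_(i in A) F i <= \sum_(i in B) F i.
Proof.
move=> AB F_ge0; rewrite [leLHS]big_mkcond [leRHS]big_mkcond /=.
apply: ler_sum => i _; case: (boolP (i \in A)) => [/(subsetP AB) -> // | _].
by case: (i \in B).
Qed.

Lemma mulr_sumlr (R : pzSemiRingType) (I J : finType) (P : pred I) (Q : pred J)
    (a : I -> R) (b : J -> R) :
  (\sum_(i | P i) a i) * (\sum_(j | Q j) b j) = \sum_(i | P i) \sum_(j | Q j) a i * b j.
Proof. by rewrite mulr_suml; apply: eq_bigr => i _; rewrite mulr_sumr. Qed.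

Lemma weighted_cauchy_schwarz (R : realDomainType) (I : finType) (P : pred I)
    (m y : I -> R) :
  (forall i, 0 <= m i) ->
  (\sum_(i | P i) m i * y i) ^+ 2
    <= (\sum_(i | P i) m i) * (\sum_(i | P i) m i * y i ^+ 2).
Proof.
move=> m_ge0.
set A := \sum_(i | P i) m i; set B := \sum_(i | P i) m i * y i.
set C := \sum_(i | P i) m i * y i ^+ 2.
have : 0 <= \sum_(i | P i) \sum_(j | P j) m i * m j * (y i - y j) ^+ 2.
  by apply: sumr_ge0 => i _; apply: sumr_ge0 => j _; rewrite mulr_ge0 ?sqr_ge0 ?mulr_ge0.
have -> : \sum_(i | P i) \sum_(j | P j) m i * m j * (y i - y j) ^+ 2
          = C * A + A * C - (B * B) *+ 2.
  rewrite /A /B /C !mulr_sumlr -!sumrMnl -!big_split /= -sumrB.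
  apply: eq_bigr => i _; rewrite -!sumrMnl -!big_split /= -sumrB.
  by apply: eq_bigr => j _; ring.
rewrite expr2; lra.
Qed.

Lemma sum_rectangle (T : finType) (V : nmodType) (P : {set T})
    (S U : {set {set T}}) (F : {set T} -> V) :
  S \subset powerset P -> U \subset powerset (~: P) ->
  \sum_(W in [set A :|: B | A in S, B in U]) F W
    = \sum_(A in S) \sum_(B in U) F (A :|: B).
Proof.
move=> SP UP.
have -> : [set A :|: B | A in S, B in U] =
    [set p.1 :|: p.2 | p in [pred p : {set T} * {set T} | (p.1 \in S) && (p.2 \in U)]].
  apply/setP => W; apply/imset2P/imsetP => [[A B A_S B_U ->] | [[A B] /andP [/= A_S B_U] ->]].
    by exists (A, B); rewrite // inE A_S B_U.
  by exists A B.
rewrite big_imset /=; first by rewrite pair_big /=; apply: eq_bigl => p; rewrite inE.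
have parts A B : A \in S -> B \in U -> (A :|: B) :&: P = A /\ (A :|: B) :&: ~: P = B.
  move=> /(subsetP SP); rewrite inE => AP /(subsetP UP); rewrite inE => BP.
  rewrite !setIUl (setIidPl AP) (setIidPl BP) !disjoint_setI0 ?setU0 ?set0U //.
    by rewrite disjoints_subset setCK.
  by rewrite disjoints_subset.
move=> [A B] [A' B'] /andP /= [A_S B_U] /andP /= [A'_S B'_U] AB_eq.
have [EA EB] := parts _ _ A_S B_U; have [EA' EB'] := parts _ _ A'_S B'_U.
by congr (_, _); [rewrite -EA -EA' AB_eq | rewrite -EB -EB' AB_eq].
Qed.

End BigSums.

Lemma expn_Nat_pow m k : m ^ k = Nat.pow m k.
Proof. by elim: k => // k IH; rewrite expnS IH. Qed.

Lemma four_576_18_le_625_18 : 4 * 576 ^ 18 <= 625 ^ 18.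
Proof.
suff in_Z a b c d e :
    Z.le (Z.mul (Z.of_nat a) (Z.pow (Z.of_nat b) (Z.of_nat c))) (Z.pow (Z.of_nat d) (Z.of_nat e)) ->
    a * b ^ c <= d ^ e by apply: in_Z; vm_compute.
move=> le_Z; apply/ssrnat.leP/Nat2Z.inj_le.
by rewrite !expn_Nat_pow mulnE Nat2Z.inj_mul !Nat2Z.inj_pow.
Qed.

Lemma expn_le_expn_l a b k : a <= b -> a ^ k <= b ^ k.
Proof. by move=> ab; case: k => [// | k]; rewrite leq_exp2r. Qed.

Lemma exp5_le_twice_diff n : 4 <= n -> 5 ^ n <= 2 * (5 ^ n - 4 ^ n).
Proof.
move=> n_ge4; have [k ->] : exists k, n = 4 + k by exists (n - 4); lia.
suff : 2 * 4 ^ (4 + k) <= 5 ^ (4 + k) by lia.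
by rewrite !expnD mulnA leq_mul // expn_le_expn_l.
Qed.

(* With [s = 2 u + r] the two sides differ exactly by the factor [(36 / 20) ^ r]. *)
Lemma cube_rectangle_bound u s :
  3 * u <= u + s -> (36 ^ u * 20 ^ s) ^ 3 <= 36 ^ (u + s) * 20 ^ (2 * (u + s)).
Proof.
move=> u_small; have [r ->] : exists r, s = 2 * u + r by exists (s - 2 * u); lia.
rewrite (_ : 36 ^ (u + (2 * u + r)) = (36 ^ u) ^ 3 * 36 ^ r); last first.
  by rewrite -expnM -expnD; congr (_ ^ _); lia.
rewrite (_ : 20 ^ (2 * u + r) = (20 ^ u) ^ 2 * 20 ^ r); last by rewrite -expnM -expnD mulnC.
rewrite (_ : 20 ^ (2 * (u + (2 * u + r))) = (20 ^ u) ^ 6 * (20 ^ r) ^ 2); last first.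
  by rewrite -!expnM -expnD; congr (_ ^ _); lia.
have := expn_le_expn_l r (isT : 20 <= 36).
move: (36 ^ u) (20 ^ u) (20 ^ r) (36 ^ r) => p q c d le_cd.
have -> : (p * (q ^ 2 * c)) ^ 3 = p ^ 3 * q ^ 6 * c ^ 2 * c by ring.
have -> : p ^ 3 * d * (q ^ 6 * c ^ 2) = p ^ 3 * q ^ 6 * c ^ 2 * d by ring.
by rewrite leq_mul2l le_cd orbT.
Qed.

Lemma exp625_le_of_cover_bound n l : 4 <= n ->
  (5 ^ n - 4 ^ n) ^ 6 <= l ^ 6 * (36 ^ n * 20 ^ (2 * n)) ->
  625 ^ n <= 2 ^ 6 * l ^ 6 * 576 ^ n.
Proof.
move=> n_ge4 cover_bound.
have : (5 ^ n) ^ 6 <= 2 ^ 6 * (l ^ 6 * (36 ^ n * 20 ^ (2 * n))).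
  apply: leq_trans (expn_le_expn_l 6 (exp5_le_twice_diff n_ge4)) _.
  by rewrite expnMn leq_mul2l cover_bound orbT.
have -> : (5 ^ n) ^ 6 = 25 ^ n * 625 ^ n by rewrite -expnM mulnC expnM -expnMn.
have -> : 36 ^ n * 20 ^ (2 * n) = 25 ^ n * 576 ^ n.
  by rewrite expnM -[20 ^ 2]/(25 * 16) -[576]/(36 * 16) !expnMn mulnCA mulnA.
have -> : 2 ^ 6 * (l ^ 6 * (25 ^ n * 576 ^ n)) = 25 ^ n * (2 ^ 6 * l ^ 6 * 576 ^ n) by ring.
by rewrite leq_pmul2l ?expn_gt0.
Qed.

Lemma exp2_le_of_exp625_le n l : 108 <= n ->
  625 ^ n <= 2 ^ 6 * l ^ 6 * 576 ^ n -> 2 ^ n <= l ^ 108.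
Proof.
move=> n_large le625.
have : 4 ^ n * 576 ^ (18 * n) <= 2 ^ 108 * l ^ 108 * 576 ^ (18 * n).
  apply: leq_trans (_ : 625 ^ (18 * n) <= _).
    by rewrite !expnM -expnMn; apply: expn_le_expn_l; exact: four_576_18_le_625_18.
  have := expn_le_expn_l 18 le625.
  by rewrite (expnMn (2 ^ 6 * l ^ 6)) (expnMn (2 ^ 6)) -!expnM ![_ * 18]mulnC.
rewrite leq_pmul2r ?expn_gt0 // (_ : 4 ^ n = 2 ^ (2 * n)) ?expnM // -expnM => le4.
have : 2 ^ n * 2 ^ 108 <= 2 ^ (2 * n) by rewrite -expnD leq_exp2l //; lia.
by move=> /leq_trans /(_ le4); rewrite mulnC leq_pmul2l ?expn_gt0.
Qed.

Lemma Rpower_le_of_expn_le (b n k l : nat) : 0 < k -> 0 < b -> b ^ n <= l ^ k ->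
  Rle (Rpower (INR b) (Rmult (Rinv (INR k)) (INR n))) (INR l).
Proof.
move=> k_gt0 b_gt0 le_bl.
have k_neq0 : INR k <> R0 by apply: not_0_INR; lia.
have b_pos : Rlt R0 (INR b) by apply/lt_0_INR/ssrnat.ltP.
have l_pos : Rlt R0 (INR l).
  apply/lt_0_INR/ssrnat.ltP.
  have : 0 < l ^ k by apply: leq_trans le_bl; rewrite expn_gt0 b_gt0.
  by rewrite expn_gt0 => /orP [// | /eqP k0]; rewrite k0 in k_gt0.
have bn_pos : Rlt R0 (INR b ^ n) by apply: pow_lt.
have le_pow : Rle (INR b ^ n) (INR l ^ k).
  by rewrite -!pow_INR; apply/le_INR/ssrnat.leP; rewrite -!expn_Nat_pow.
have inv_k_ge0 : Rle R0 (/ INR k) by apply/Rlt_le/Rinv_0_lt_compat/lt_0_INR/ssrnat.ltP.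
have := Rle_Rpower_l _ _ _ inv_k_ge0 (conj bn_pos le_pow).
by rewrite -!Rpower_pow // !Rpower_mult Rinv_r // Rpower_1 // Rmult_comm.
Qed.

Section Pairs.
Variable n : nat.
Local Notation zset := {set 'I_(2 * n)}.

Lemma xz_proof (t : 'I_n) : val t < 2 * n.
Proof. by rewrite mul2n -addnn (ltn_addr _ (ltn_ord t)). Qed.

Lemma yz_proof (t : 'I_n) : val t + n < 2 * n.
Proof. by rewrite mul2n -addnn ltn_add2r ltn_ord. Qed.

Definition xz (t : 'I_n) : 'I_(2 * n) := Ordinal (xz_proof t).
Definition yz (t : 'I_n) : 'I_(2 * n) := Ordinal (yz_proof t).

Lemma xz_inj : injective xz.
Proof. by move=> a b /(congr1 val) /= /val_inj. Qed.

Lemma yz_inj : injective yz.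
Proof. by move=> a b /(congr1 val) /= /eqP; rewrite eqn_add2r => /eqP /val_inj. Qed.

Lemma xz_neq_yz (a b : 'I_n) : xz a != yz b.
Proof. by apply/eqP => /(congr1 val) /= ab; move: (ltn_ord a); rewrite ab ltnNge leq_addl. Qed.

Lemma xz_or_yz (z : 'I_(2 * n)) : exists t, z = xz t \/ z = yz t.
Proof.
case: (ltnP (val z) n) => [z_small | z_large].
  by exists (Ordinal z_small); left; exact: val_inj.
have z_sub : val z - n < n by rewrite ltn_subLR // addnn -mul2n ltn_ord.
by exists (Ordinal z_sub); right; apply: val_inj; rewrite /= subnK.
Qed.

Definition set_of_pairs (f : {ffun 'I_n -> bool * bool}) : zset :=
  [set z | [exists t, ((f t).1 && (z == xz t)) || ((f t).2 && (z == yz t))]].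

Definition pairs_of_set (W : zset) : {ffun 'I_n -> bool * bool} :=
  [ffun t => (xz t \in W, yz t \in W)].

Lemma mem_set_of_pairs_x f t : (xz t \in set_of_pairs f) = (f t).1.
Proof.
rewrite inE; apply/existsP/idP => [[u /orP [/andP [fu /eqP /xz_inj -> //] |
                                             /andP [_ /eqP xy]]] | ft].
  by move: (xz_neq_yz t u); rewrite xy eqxx.
by exists t; rewrite ft eqxx.
Qed.

Lemma mem_set_of_pairs_y f t : (yz t \in set_of_pairs f) = (f t).2.
Proof.
rewrite inE; apply/existsP/idP => [[u /orP [/andP [_ /eqP yx] |
                                             /andP [fu /eqP /yz_inj -> //]]] | ft].
  by move: (xz_neq_yz u t); rewrite -yx eqxx.
by exists t; rewrite ft eqxx orbT.
Qed.

Lemma set_of_pairsK : cancel set_of_pairs pairs_of_set.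
Proof.
move=> f; apply/ffunP => t; rewrite ffunE mem_set_of_pairs_x mem_set_of_pairs_y.
by case: (f t).
Qed.

Lemma pairs_of_setK : cancel pairs_of_set set_of_pairs.
Proof.
move=> W; apply/setP => z; have [t [-> | ->]] := xz_or_yz z.
  by rewrite mem_set_of_pairs_x ffunE.
by rewrite mem_set_of_pairs_y ffunE.
Qed.

Local Open Scope ring_scope.

Lemma sum_prod_pairs (h : 'I_n -> bool -> bool -> int) :
  \sum_(W : zset) \prod_(t < n) h t (xz t \in W) (yz t \in W)
    = \prod_(t < n) \sum_(p : bool * bool) h t p.1 p.2.
Proof.
rewrite bigA_distr_bigA /= (reindex set_of_pairs); last first.
  by exists pairs_of_set => f _; [exact: set_of_pairsK | exact: pairs_of_setK].
apply: eq_bigr => f _; apply: eq_bigr => t _.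
by rewrite mem_set_of_pairs_x mem_set_of_pairs_y.
Qed.

Definition within (P : zset) t (a b : bool) := (a ==> (xz t \in P)) && (b ==> (yz t \in P)).

Lemma ind_subset_pairs (A P : zset) :
  ind (A \subset P) = \prod_(t < n) ind (within P t (xz t \in A) (yz t \in A)).
Proof.
rewrite prod_ind; congr ind; apply/subsetP/forallP => [AP t | AP z]; rewrite /within.
  by apply/andP; split; apply/implyP => /AP.
by have [t [-> | ->]] := xz_or_yz z; case/andP: (AP t) => /implyP ? /implyP ?.
Qed.

Lemma sum_powerset_prod_pairs (P : zset) (F : 'I_n -> bool -> bool -> int) :
  \sum_(A in powerset P) \prod_(t < n) F t (xz t \in A) (yz t \in A)
    = \prod_(t < n) \sum_(p : bool * bool) ind (within P t p.1 p.2) * F t p.1 p.2.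
Proof.
rewrite big_mkcond /=.
rewrite -(sum_prod_pairs (fun t a b => ind (within P t a b) * F t a b)).
apply: eq_bigr => A _.
rewrite inE big_split /= -ind_subset_pairs.
by case: (A \subset P); rewrite /ind ?mul1r ?mul0r.
Qed.

Lemma exp2_card_pairs (P : zset) : (2 ^ #|P|)%:R =
  \prod_(t < n) \sum_(p : bool * bool) ind (within P t p.1 p.2).
Proof.
rewrite -card_powerset -sumr_const.
have := sum_powerset_prod_pairs P (fun _ _ _ => 1).
rewrite (eq_bigr (fun=> 1)) => [-> | A _]; last exact: big1_eq.
by apply: eq_bigr => t _; apply: eq_bigr => p _; rewrite mulr1.
Qed.

(* [q a b] weighs a pair with membership pattern [(a, b)]: the four values sum to 4,
   and to 5 once the pattern [(true, true)] is excluded. *)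
Definition q (a b : bool) : int :=
  match a, b with false, false => 1 | true, true => -1 | _, _ => 2 end.

Definition weight (W : zset) : int := \prod_(t < n) q (xz t \in W) (yz t \in W).

Definition family_weight (X : {set zset}) : int := \sum_(W in X) weight W.

Lemma mem_Lang W : (W \in Lang n) = [exists t, (xz t \in W) && (yz t \in W)].
Proof.
rewrite inE; apply/idP/existsP => [|[t /andP [xt_W yt_W]]].
  case/exists_inP=> x x_W /exists_inP [y y_W /andP [x_lt /eqP y_x]].
  exists (Ordinal x_lt).
  have -> : xz (Ordinal x_lt) = x by apply: val_inj.
  have -> : yz (Ordinal x_lt) = y by apply: val_inj; rewrite /= y_x.
  by rewrite x_W y_W.
apply/exists_inP; exists (xz t) => //.
by apply/exists_inP; exists (yz t); rewrite //= ltn_ord eqxx.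
Qed.

Lemma family_weight_Lang : family_weight (Lang n) = 4 ^+ n - 5 ^+ n.
Proof.
have all_sets : \sum_(W : zset) weight W = 4 ^+ n.
  rewrite (sum_prod_pairs (fun _ => q)) (eq_bigr (fun=> 4)) ?prodr_const ?card_ord // => t _.
  by rewrite sum_pair_bool.
have outside W : weight W - (if W \in Lang n then weight W else 0)
    = \prod_(t < n) (ind (~~ ((xz t \in W) && (yz t \in W))) * q (xz t \in W) (yz t \in W)).
  rewrite big_split /= prod_ind mem_Lang -negb_exists.
  by case: [exists t, _]; rewrite /ind ?mul1r ?mul0r ?subr0 ?subrr.
have outside_Lang :
    \sum_(W : zset) (weight W - (if W \in Lang n then weight W else 0)) = 5 ^+ n.
  rewrite (eq_bigr _ (fun W _ => outside W)).
  rewrite (sum_prod_pairs (fun _ a b => ind (~~ (a && b)) * q a b)).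
  rewrite (eq_bigr (fun=> 5)) ?prodr_const ?card_ord // => t _.
  by rewrite (sum_pair_bool (fun a b => ind (~~ (a && b)) * q a b)).
by rewrite /family_weight big_mkcond /= -all_sets -outside_Lang sumrB opprB addrC subrK.
Qed.

Section Cut.
Variable P0 : zset.
Hypothesis P0_meets_pairs : forall t, (xz t \in P0) || (yz t \in P0).

Definition cut t := (xz t \in P0) != (yz t \in P0).
Definition ncut := #|[pred t | cut t]|.
Definition nin := #|[pred t | ~~ cut t]|.

Lemma ncut_nin : (ncut + nin)%N = n.
Proof. by rewrite /ncut /nin cardC card_ord. Qed.

Lemma prod_cut (a b : int) : \prod_(t < n) (if cut t then a else b) = a ^+ ncut * b ^+ nin.
Proof.
rewrite (bigID cut) /= /ncut /nin -!prodr_const.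
by congr (_ * _); apply: eq_big => // t; case: (cut t).
Qed.

(* Both cardinalities are read off by counting subsets pair by pair. *)
Lemma card_P0 : #|P0| = (ncut + 2 * nin)%N.
Proof.
apply: (expnI (isT : (1 < 2)%N)); apply/eqP; rewrite -(@eqr_nat int).
rewrite exp2_card_pairs expnD expnM natrM !natrX -prod_cut; apply/eqP/eq_bigr => t _.
rewrite (sum_pair_bool (fun a b => ind (within P0 t a b))).
by rewrite /within /cut; move: (P0_meets_pairs t); case: (xz t \in P0); case: (yz t \in P0).
Qed.

Lemma card_compl_P0 : #|~: P0| = ncut.
Proof.
apply: (expnI (isT : (1 < 2)%N)); apply/eqP; rewrite -(@eqr_nat int).
rewrite exp2_card_pairs natrX.
have -> : (2%:R : int) ^+ ncut = 2%:R ^+ ncut * 1 ^+ nin by rewrite expr1n mulr1.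
rewrite -prod_cut; apply/eqP/eq_bigr => t _.
rewrite (sum_pair_bool (fun a b => ind (within (~: P0) t a b))).
by rewrite /within !inE /cut; move: (P0_meets_pairs t); case: (xz t \in P0); case: (yz t \in P0).
Qed.

Definition q_in t a b := if cut t then 1 else q a b.
Definition q_cut t a b := if cut t then q a b else 1.
Definition weight_in (W : zset) := \prod_(t < n) q_in t (xz t \in W) (yz t \in W).
Definition weight_cut (W : zset) := \prod_(t < n) q_cut t (xz t \in W) (yz t \in W).

Lemma notin_compl_P0 (B : zset) z : B \subset ~: P0 -> z \in P0 -> (z \in B) = false.
Proof. by move=> BP zP; apply/negbTE/negP => /(subsetP BP); rewrite inE zP. Qed.

Lemma weight_in_cut (A B : zset) :
  B \subset ~: P0 -> weight (A :|: B) = weight_in A * weight_cut (A :|: B).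
Proof.
move=> BP; rewrite /weight -big_split /=; apply: eq_bigr => t _.
rewrite /q_in /q_cut /cut; move: (P0_meets_pairs t).
case xP: (xz t \in P0); case yP: (yz t \in P0) => //= _; rewrite ?mul1r ?mulr1 //.
by rewrite !inE !(notin_compl_P0 BP xP) !(notin_compl_P0 BP yP) !orbF.
Qed.

Lemma sum_abs_weight_in : \sum_(A in powerset P0) `|weight_in A| = 2 ^+ ncut * 6 ^+ nin.
Proof.
under eq_bigr => A _ do rewrite /weight_in normr_prod.
rewrite (sum_powerset_prod_pairs P0 (fun t a b => `|q_in t a b|)) -prod_cut.
apply: eq_bigr => t _.
rewrite (sum_pair_bool (fun a b => ind (within P0 t a b)
                                   * `|q_in t a b|)).
by rewrite /within /q_in /cut; move: (P0_meets_pairs t); case: (xz t \in P0); case: (yz t \in P0).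
Qed.

Definition agree (B B' : zset) t :=
  ((xz t \in B) == (xz t \in B')) && ((yz t \in B) == (yz t \in B')).

Lemma exists_cut_disagree (B B' : zset) : B \subset ~: P0 -> B' \subset ~: P0 ->
  B != B' -> exists2 t, cut t & ~~ agree B B' t.
Proof.
move=> BP B'P neqBB'.
have [z zB] : exists z, (z \in B) != (z \in B').
  apply/existsP; rewrite -negb_forall; apply: contra neqBB' => /forallP eqBB'.
  by apply/eqP/setP => z; apply/eqP.
have zP : z \notin P0.
  by move: zB; case: (boolP (z \in B)) => [/(subsetP BP) | _ /negbNE /(subsetP B'P)]; rewrite inE.
have [t [zt | zt]] := xz_or_yz z; exists t; subst z.
- by rewrite /cut (negbTE zP); move: (P0_meets_pairs t); rewrite (negbTE zP) => /= ->.
- by rewrite /agree negb_and zB.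
- by rewrite /cut (negbTE zP); move: (P0_meets_pairs t); rewrite (negbTE zP) orbF => ->.
- by rewrite /agree negb_and zB orbT.
Qed.

Lemma cut_orthogonal_pair (B B' : zset) t : B \subset ~: P0 -> B' \subset ~: P0 ->
  \sum_(p : bool * bool) ind (within P0 t p.1 p.2) *
     (`|q_in t p.1 p.2| * (q_cut t (p.1 || (xz t \in B)) (p.2 || (yz t \in B)) *
                           q_cut t (p.1 || (xz t \in B')) (p.2 || (yz t \in B'))))
  = if cut t then (if agree B B' t then 5 else 0) else 6.
Proof.
move=> BP B'P.
rewrite (sum_pair_bool (fun a b => ind (within P0 t a b) *
     (`|q_in t a b| * (q_cut t (a || (xz t \in B)) (b || (yz t \in B)) *
                       q_cut t (a || (xz t \in B')) (b || (yz t \in B')))))).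
rewrite /within /q_in /q_cut /cut /agree; move: (P0_meets_pairs t).
case xP: (xz t \in P0); case yP: (yz t \in P0) => //= _.
all: rewrite ?(notin_compl_P0 BP xP) ?(notin_compl_P0 B'P xP).
all: rewrite ?(notin_compl_P0 BP yP) ?(notin_compl_P0 B'P yP).
all: by case: (xz t \in B); case: (xz t \in B'); case: (yz t \in B); case: (yz t \in B').
Qed.

Lemma weight_cut_orthogonal (B B' : zset) : B \subset ~: P0 -> B' \subset ~: P0 ->
  \sum_(A in powerset P0) `|weight_in A| * (weight_cut (A :|: B) * weight_cut (A :|: B'))
    = if B == B' then 5 ^+ ncut * 6 ^+ nin else 0.
Proof.
move=> BP B'P.
under eq_bigr => A _ do rewrite /weight_in /weight_cut normr_prod -!big_split /=.
under eq_bigr => A _ do under eq_bigr => t _ do rewrite !inE.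
rewrite (sum_powerset_prod_pairs P0 (fun t a b => `|q_in t a b| *
    (q_cut t (a || (xz t \in B)) (b || (yz t \in B)) *
     q_cut t (a || (xz t \in B')) (b || (yz t \in B'))))).
under eq_bigr => t _ do rewrite cut_orthogonal_pair //.
case: eqP => [<- | /eqP neqBB'].
  by rewrite -prod_cut; apply: eq_bigr => t _; rewrite /agree !eqxx.
have [t cut_t disagree_t] := exists_cut_disagree BP B'P neqBB'.
by rewrite (bigD1 t) //= cut_t (negbTE disagree_t) mul0r.
Qed.

Lemma sum_sqr_weight_cut (U : {set zset}) : U \subset powerset (~: P0) ->
  \sum_(A in powerset P0) `|weight_in A| * (\sum_(B in U) weight_cut (A :|: B)) ^+ 2
    = 5 ^+ ncut * 6 ^+ nin *+ #|U|.
Proof.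
move=> UP; have UP' B : B \in U -> B \subset ~: P0 by move/(subsetP UP); rewrite inE.
under eq_bigr => A _ do rewrite expr2 mulr_sumlr mulr_sumr.
rewrite exchange_big -sumr_const; apply: eq_bigr => B B_U.
under eq_bigr => A _ do rewrite mulr_sumr.
rewrite exchange_big (bigD1 B) //= weight_cut_orthogonal ?UP' // eqxx big1 ?addr0 //.
move=> B' /andP [B'_U neqB'B].
by rewrite weight_cut_orthogonal ?UP' // eq_sym (negbTE neqB'B).
Qed.

Lemma rectangle_weight_sqr_le (S U : {set zset}) :
  S \subset powerset P0 -> U \subset powerset (~: P0) ->
  (\sum_(A in S) \sum_(B in U) weight (A :|: B)) ^+ 2 <= 36 ^+ nin * 20 ^+ ncut.
Proof.
move=> SP UP; pose h A : int := \sum_(B in U) weight_cut (A :|: B).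
have -> : \sum_(A in S) \sum_(B in U) weight (A :|: B) = \sum_(A in S) weight_in A * h A.
  apply: eq_bigr => A _; rewrite /h mulr_sumr; apply: eq_bigr => B /(subsetP UP).
  by rewrite inE => /weight_in_cut.
have card_U : #|U|%:R <= 2 ^+ ncut :> int.
  by rewrite -card_compl_P0 -natrX ler_nat -card_powerset subset_leq_card.
have abs_ge0 : forall A, 0 <= `|weight_in A| by move=> A; exact: normr_ge0.
have triangle : (\sum_(A in S) weight_in A * h A) ^+ 2
                <= (\sum_(A in S) `|weight_in A| * `|h A|) ^+ 2.
  have abs_sum : `|\sum_(A in S) weight_in A * h A| <= \sum_(A in S) `|weight_in A| * `|h A|.
    by apply: (le_trans (ler_norm_sum _ _ _)); under eq_bigr do rewrite normrM.
  by rewrite -real_normK ?num_real // !expr2 ler_pM.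
apply: (le_trans triangle).
apply: (le_trans (weighted_cauchy_schwarz (mem S) (fun A => `|h A|) abs_ge0)).
apply: le_trans (_ : (\sum_(A in powerset P0) `|weight_in A|)
                     * (\sum_(A in powerset P0) `|weight_in A| * h A ^+ 2) <= _).
  have sqr_ge0 A : 0 <= `|weight_in A| * `|h A| ^+ 2 by rewrite mulr_ge0 ?exprn_ge0.
  have := ler_sum_subset SP sqr_ge0.
  under [X in _ <= X -> _]eq_bigr => A _ do rewrite real_normK ?num_real //.
  by apply: ler_pM; rewrite ?sumr_ge0 ?ler_sum_subset.
rewrite sum_abs_weight_in sum_sqr_weight_cut // -(mulr_natr (5 ^+ ncut * 6 ^+ nin)).
have -> : 36 ^+ nin * 20 ^+ ncut
          = 2 ^+ ncut * 6 ^+ nin * (5 ^+ ncut * 6 ^+ nin * 2 ^+ ncut) :> int.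
  by rewrite (_ : 36 = 6 * 6) // (_ : 20 = 2 * 5 * 2) // !exprMn; ring.
by do 2 (apply: ler_wpM2l; rewrite ?mulr_ge0 ?exprn_ge0 //).
Qed.

Lemma rectangle_weight_bound (S U : {set zset}) :
  S \subset powerset P0 -> U \subset powerset (~: P0) -> (3 * #|P0| <= 4 * n)%N ->
  (absz (\sum_(A in S) \sum_(B in U) weight (A :|: B))%R ^ 6 <= 36 ^ n * 20 ^ (2 * n))%N.
Proof.
move=> SP UP balanced.
have nin_small : (3 * nin <= nin + ncut)%N by move: balanced; rewrite card_P0 -ncut_nin; lia.
apply: leq_trans (_ : _ <= (36 ^ nin * 20 ^ ncut) ^ 3)%N _; last first.
  by have := cube_rectangle_bound nin_small; rewrite addnC ncut_nin.
rewrite (_ : 6 = 2 * 3)%N // expnM expn_le_expn_l //.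
rewrite -(@ler_nat int) natrM !natrX natz abszE real_normK ?num_real //.
exact: rectangle_weight_sqr_le.
Qed.

End Cut.

Lemma Zint_pairs_dichotomy i j :
  (forall t, (xz t \in Zint n i j) || (yz t \in Zint n i j)) \/
  (forall t, (xz t \notin Zint n i j) || (yz t \notin Zint n i j)).
Proof.
case: (boolP [forall t, (xz t \in Zint n i j) || (yz t \in Zint n i j)]) =>
    [/forallP meets | /forallPn [t misses]]; [by left | right => u].
(* An interval missing both [z_t] and [z_(t+n)] has fewer than [n] elements. *)
by move: misses; rewrite !inE /=; have := ltn_ord t; have := ltn_ord u; lia.
Qed.

Lemma ordered_part_meets_pairs (P : zset) : ordered_part P ->
  (forall t, (xz t \in P) || (yz t \in P)) \/ (forall t, (xz t \in ~: P) || (yz t \in ~: P)).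
Proof.
case=> i [j [-> | compl_P]].
  by case: (Zint_pairs_dichotomy i j) => meets; [left | right] => t; rewrite ?in_setC meets.
case: (Zint_pairs_dichotomy i j) => meets; [right | left] => t; first by rewrite compl_P.
by move: (meets t); rewrite -compl_P !in_setC !negbK.
Qed.

Lemma ob_rectangle_weight_bound (R : {set zset}) : ob_rectangle R ->
  (absz (family_weight R) ^ 6 <= 36 ^ n * 20 ^ (2 * n))%N.
Proof.
case=> P [ordered [_ balanced _ balanced_compl] [S [U [SP UP ->]]]].
case: (ordered_part_meets_pairs ordered) => meets.
  rewrite /family_weight (sum_rectangle weight SP UP).
  exact (rectangle_weight_bound meets SP UP balanced).
have SP' : S \subset powerset (~: ~: P) by rewrite setCK.
have -> : [set A :|: B | A in S, B in U] = [set B :|: A | B in U, A in S].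
  by apply/setP => W; apply/imset2P/imset2P => -[X Y X_in Y_in ->]; exists Y X; rewrite // setUC.
rewrite /family_weight (sum_rectangle weight UP SP').
exact (rectangle_weight_bound meets UP SP' balanced_compl).
Qed.

End Pairs.

Lemma cover_weight_bound n l (Rs : 'I_l -> {set {set 'I_(2 * n)}}) :
  (forall k, ob_rectangle (Rs k)) ->
  (forall k1 k2 : 'I_l, k1 != k2 -> [disjoint Rs k1 & Rs k2]) ->
  \bigcup_(k < l) Rs k = Lang n ->
  (5 ^ n - 4 ^ n) ^ 6 <= l ^ 6 * (36 ^ n * 20 ^ (2 * n)).
Proof.
move=> Rs_ob Rs_disj Rs_cover.
pose M := \max_(k < l) absz (family_weight (Rs k)).
have Lang_le : 5 ^ n - 4 ^ n <= \sum_(k < l) absz (family_weight (Rs k)).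
  rewrite -(@ler_nat int) natr_sum natrB ?expn_le_expn_l // !natrX.
  rewrite -opprB -family_weight_Lang -Rs_cover /family_weight partition_disjoint_bigcup //.
  apply: le_trans (ler_norm _) _; rewrite normrN; apply: (le_trans (ler_norm_sum _ _ _)).
  by apply: ler_sum => k _; rewrite natz abszE.
have sum_le : \sum_(k < l) absz (family_weight (Rs k)) <= l * M.
  rewrite -[l in l * M]card_ord -sum_nat_const; apply: leq_sum => k _; exact: leq_bigmax.
have M_bound : M ^ 6 <= 36 ^ n * 20 ^ (2 * n).
  rewrite /M; elim/big_ind: _ => [| x y x_le y_le | k _]; first by rewrite exp0n.
    by rewrite /maxn; case: ifP.
  exact: ob_rectangle_weight_bound.
apply: leq_trans (_ : (l * M) ^ 6 <= _).
  by apply/expn_le_expn_l/(leq_trans Lang_le).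
by rewrite expnMn leq_mul2l M_bound orbT.
Qed.

Theorem mainTheorem9 :
  exists c : R, Rlt R0 c /\
  exists n0 : nat, forall n : nat, n0 <= n ->
  forall (l : nat) (Rs : 'I_l -> {set {set 'I_(2*n)}}),
    (forall k, ob_rectangle (Rs k)) ->
    (forall k1 k2 : 'I_l, k1 != k2 -> [disjoint Rs k1 & Rs k2]) ->
    \bigcup_(k < l) Rs k = Lang n ->
    Rle (Rpower (INR 2) (Rmult c (INR n))) (INR l).
Proof.
exists (Rinv (INR 108)); split; first by apply/Rinv_0_lt_compat/lt_0_INR/ssrnat.ltP.
exists 108 => n n_large l Rs Rs_ob Rs_disj Rs_cover.
have n_ge4 : 4 <= n := leq_trans (isT : 4 <= 108) n_large.
apply: Rpower_le_of_expn_le => //; apply: (exp2_le_of_exp625_le n_large).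
exact: exp625_le_of_cover_bound n_ge4 (cover_weight_bound Rs_ob Rs_disj Rs_cover).
Qed.
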